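(* Let $\|\cdot\|$ be a norm on $\mathbb{R}^n$ and let $F:\mathbb{R}^n\to\mathbb{R}^n$ be continuous and monotone with respect to $\|\cdot\|$ with monotonicity parameter $c\ge0$. Then for all $\alpha>0$, the resolvent $J_{\alpha F}=(\mathrm{Id}+\alpha F)^{-1}$ satisfies $\mathrm{Lip}(J_{\alpha F})\le\frac{1}{1+\alpha c}$.
   Context: $\mathrm{Lip}(T)$ denotes the smallest constant $L$ with $\|T(x)-T(y)\|\le L\|x-y\|$ for all $x,y$. A weak pairing (WP) on $\mathbb{R}^n$ is a map $[\![\cdot,\cdot]\!]:\mathbb{R}^n\times\mathbb{R}^n\to\mathbb{R}$ that is subadditive and continuous in its first argument, satisfies $[\![\alpha x,y]\!]=[\![x,\alpha y]\!]=\alpha[\![x,y]\!]$ for $\alpha\ge0$ and $[\![-x,-y]\!]=[\![x,y]\!]$, $[\![x,x]\!]>0$ for $x\ne0$, and $|[\![x,y]\!]|\le[\![x,x]\!]^{1/2}[\![y,y]\!]^{1/2}$; it is compatible with a norm if $[\![x,x]\!]=\|x\|^2$. WPs are assumed to also satisfy Deimling's inequality $[\![x,y]\!]\le\|y\|\lim_{h\to0^+}h^{-1}(\|y+hx\|-\|y\|)$ and the curve norm derivative formula ($\|x(t)\|D^+\|x(t)\|=[\![\dot x(t),x(t)]\!]$ a.e. for differentiable curves). $F$ is monotone with monotonicity parameter $c\ge0$ w.r.t. $\|\cdot\|$ if for some compatible WP, $-[\![-(F(x)-F(y)),x-y]\!]\ge c\|x-y\|^2$ for all $x,y$. *)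

From HB Require Import structures.
From mathcomp Require Import all_boot all_order all_algebra.
From mathcomp Require Import all_classical all_reals all_analysis.
Set Implicit Arguments. Unset Strict Implicit. Unset Printing Implicit Defensive.
Import Order.TTheory GRing.Theory Num.Theory.
Import numFieldNormedType.Exports.
Local Open Scope classical_set_scope.
Local Open Scope ring_scope.

Section Defs.
Variables (R : realType) (n : nat).
Local Notation V := 'rV[R]_n.

Definition is_norm (nrm : V -> R) : Prop :=
  [/\ forall x, 0 <= nrm x,
      forall x, nrm x = 0 -> x = 0,
      forall (a : R) x, nrm (a *: x) = `|a| * nrm x
    & forall x y, nrm (x + y) <= nrm x + nrm y].

Definition is_weak_pairing (wp : V -> V -> R) : Prop :=
  [/\ forall x1 x2 y, wp (x1 + x2) y <= wp x1 y + wp x2 y,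
      forall y, continuous (fun x => wp x y),
      forall (a : R) x y, 0 <= a -> (wp (a *: x) y = a * wp x y /\ wp x (a *: y) = a * wp x y),
      forall x y, wp (- x) (- y) = wp x y
    & (forall x, x != 0 -> 0 < wp x x) /\
      forall x y, `|wp x y| <= Num.sqrt (wp x x) * Num.sqrt (wp y y)].

Definition wp_compatible (nrm : V -> R) (wp : V -> V -> R) : Prop :=
  forall x, wp x x = nrm x ^+ 2.

Definition deimling_ineq (nrm : V -> R) (wp : V -> V -> R) : Prop :=
  forall x y, wp x y <=
    nrm y * lim ((fun h : R => h^-1 * (nrm (y + h *: x) - nrm y)) @ 0^'+).

Definition dini_upper_right (g : R -> R) (t : R) : \bar R :=
  limf_esup (fun h : R => ((g (t + h) - g t) / h)%:E) 0^'+.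

Definition curve_norm_derivative (nrm : V -> R) (wp : V -> V -> R) : Prop :=
  forall x : R -> V, (forall t, derivable x t 1) ->
    {ae (@lebesgue_measure R), forall t,
       ((nrm (x t))%:E * dini_upper_right (fun s => nrm (x s)) t)%E
       = (wp ('D_1 x t) (x t))%:E}.

Definition WP_for (nrm : V -> R) (wp : V -> V -> R) : Prop :=
  [/\ is_weak_pairing wp, deimling_ineq nrm wp & curve_norm_derivative nrm wp].

Definition monotone_wrt (nrm : V -> R) (F : V -> V) (c : R) : Prop :=
  0 <= c /\
  exists wp : V -> V -> R,
    [/\ WP_for nrm wp, wp_compatible nrm wp
      & forall x y, - wp (- (F x - F y)) (x - y) >= c * nrm (x - y) ^+ 2].

Definition lip_le (nrm : V -> R) (T : V -> V) (L : R) : Prop :=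
  forall x y, nrm (T x - T y) <= L * nrm (x - y).

End Defs.

From HB Require Import structures.
From mathcomp Require Import all_boot all_order all_algebra.
From mathcomp Require Import all_classical all_reals all_analysis.
From mathcomp Require Import ring lra.
Import Order.TTheory GRing.Theory Num.Theory.
Import numFieldNormedType.Exports.
Local Open Scope classical_set_scope.
Local Open Scope ring_scope.

(** Monotonicity with parameter [c] yields, through subadditivity and the
    Cauchy-Schwarz inequality of the weak pairing, the strong accretivity
    estimate [(1 + h c) |x - y| <= |x - y + h (F x - F y)|] for all [h >= 0].
    At [h = alpha] it says that [Id + alpha F] expands distances by [1 + alpha c],
    so its inverse, once it exists, is [1 / (1 + alpha c)]-Lipschitz.

    The real work is surjectivity.  For a target [u], the map
    [G = Id + alpha F - u] is continuous and strongly accretive with constant 1,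
    and it has a zero: [|G|] attains its minimum on the compact ball
    [|x| <= |G 0| + 1], and that minimum is arbitrarily small.  To see this, run
    the explicit Euler scheme [x_(k+1) = x_k - h G x_k] from 0.  Accretivity and
    uniform continuity of [G] on the ball make each step a [1 / (1 + h)]
    contraction up to an error [2 h w], where [w] is the modulus of continuity
    of [G] at the step size; so the iterates stay in the ball and
    [x_(k+j) - x_k] is of order [w] once [(1 + h)^k] is large.  As [w] depends
    on [h], a single step only gives [|G x_k| = O(w / h)]; averaging [G] over
    [1 / h] consecutive steps gives [|G x_k| = O(w) + o(1)] instead. *)

Lemma compact_uniform_continuous {K : realType} {U V : normedModType K}
    (f : U -> V) (A : set U) (e : K) :
  continuous f -> compact A -> 0 < e ->
  exists2 d, 0 < d & forall x y, A x -> A y -> `|x - y| < d -> `|f x - f y| < e.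
Proof.
move=> fc Ac e0.
pose gap (p : U * U) := `|f p.1 - f p.2|.
pose dist (p : U * U) := `|p.1 - p.2|.
have gap_cont : continuous gap.
  move=> p; have fB : {for p, continuous (fun q : U * U => f q.1 - f q.2)}.
    by apply: continuousB; apply: (continuous_comp _ (fc _));
      [exact: cvg_fst | exact: cvg_snd].
  exact: (continuous_comp fB (@norm_continuous _ _ _)).
have dist_cont : continuous dist.
  move=> p; have B : {for p, continuous (fun q : U * U => q.1 - q.2)}.
    exact: continuousB cvg_fst cvg_snd.
  exact: (continuous_comp B (@norm_continuous _ _ _)).
pose bad := (A `*` A) `&` [set p | e <= gap p].
have bad_compact : compact bad.
  apply: compact_closedI; first exact: compact_setX.
  by have := proj1 (continuous_closedP _) gap_cont _ (@closed_ge _ e).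
have [[p0 bad_p0]|bad0] := pselect (bad !=set0); last first.
  exists 1 => // x y Ax Ay _; rewrite ltNge; apply/negP => exy.
  by apply: bad0; exists (x, y).
have [p p_bad p_min] := compact_EVT_min (ex_intro _ p0 bad_p0) bad_compact
  (continuous_subspaceT dist_cont).
have [_ /= e_gap] := set_mem p_bad.
exists (dist p) => [|x y Ax Ay dxy].
  rewrite normr_gt0 subr_eq0; apply: contraTneq e_gap => p12.
  by rewrite /gap p12 subrr normr0 -ltNge.
rewrite ltNge; apply: contraTN dxy => exy; rewrite -leNgt.
by apply: (p_min (x, y)); rewrite inE.
Qed.

Lemma bernoulli_ineq {R : realDomainType} (h : R) k :
  0 <= h -> 1 + k%:R * h <= (1 + h) ^+ k.
Proof.
move=> h_ge0; elim: k => [|k IH]; first by rewrite mul0r expr0 addr0.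
have : 0 <= k%:R * h * h by rewrite !mulr_ge0.
by rewrite exprS -natr1; nra.
Qed.

Lemma exists_expr_ge {R : archiRealFieldType} (h c delta : R) :
  0 < h -> 0 < delta -> exists k, c <= (1 + h) ^+ k * delta.
Proof.
move=> h_gt0 delta_gt0; pose k := Num.Def.archi_bound (`|c| / (delta * h)).
have : `|c| / (delta * h) < k%:R.
  by apply: archi_boundP; apply: divr_ge0 => //; exact/ltW/mulr_gt0.
rewrite ltr_pdivrMr ?mulr_gt0 // => ck; exists k.
have := bernoulli_ineq h k (ltW h_gt0); rewrite -(ler_pM2r delta_gt0) => kh.
apply: le_trans kh; have := ler_norm c; nra.
Qed.

Lemma ler_coord_mx_norm {K : realDomainType} {m n : nat} (x : 'M[K]_(m, n)) i j :
  `|x i j| <= `|x|.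
Proof.
have /mapP[k _ ->] : `|x i j| \in [seq `|x k.1 k.2| | k : 'I_m * 'I_n].
  by apply/mapP; exists (i, j) => //=; rewrite mem_enum.
by rewrite [leRHS]/Num.norm /= mx_normrE; apply/bigmax_geP; right; exists k.
Qed.

Lemma closed_mx_norm_bounded_compact {R : realType} {n : nat}
    (A : set 'rV[R]_n) (B : R) :
  closed A -> (forall x, A x -> `|x| <= B) -> compact A.
Proof.
move=> Acl AB; apply: bounded_closed_compact => //.
exists B; split; first exact: num_real.
by move=> M BM x Ax; apply: le_trans (AB _ Ax) (ltW BM).
Qed.

Definition strongly_accretive {R : realType} {n : nat} (nrm : 'rV[R]_n -> R)
    (F : 'rV[R]_n -> 'rV[R]_n) (c : R) : Prop :=
  forall x y (h : R), 0 <= h ->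
    (1 + h * c) * nrm (x - y) <= nrm (x - y + h *: (F x - F y)).

Section FiniteDimensionalNorm.
Context {R : realType} {n : nat} {nrm : 'rV[R]_n -> R} (nrm_norm : is_norm nrm).

Let nrm_ge0 (x : 'rV[R]_n) : 0 <= nrm x.
Proof. by case: nrm_norm. Qed.
Let nrm_eq0 (x : 'rV[R]_n) : nrm x = 0 -> x = 0.
Proof. by case: nrm_norm => _ + _ _; apply. Qed.
Let nrmZ (a : R) (x : 'rV[R]_n) : nrm (a *: x) = `|a| * nrm x.
Proof. by case: nrm_norm. Qed.
Let nrm_triangle (x y : 'rV[R]_n) : nrm (x + y) <= nrm x + nrm y.
Proof. by case: nrm_norm. Qed.

Lemma nrm0 : nrm 0 = 0.
Proof. by rewrite -(scale0r 0) nrmZ normr0 mul0r. Qed.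

Lemma nrmN x : nrm (- x) = nrm x.
Proof. by rewrite -scaleN1r nrmZ normrN normr1 mul1r. Qed.

Lemma ler_nrm_sum {I : Type} (r : seq I) (P : pred I) (f : I -> 'rV[R]_n) :
  nrm (\sum_(i <- r | P i) f i) <= \sum_(i <- r | P i) nrm (f i).
Proof.
elim/big_rec2: _ => [|i y1 y2 _ IH]; first by rewrite nrm0.
by apply: le_trans (nrm_triangle _ _) _; rewrite lerD2l.
Qed.

Lemma nrm_distC x y : nrm (x - y) = nrm (y - x).
Proof. by rewrite -nrmN opprB. Qed.

Lemma ler_dist_nrm x y : `|nrm x - nrm y| <= nrm (x - y).
Proof.
have := nrm_triangle (x - y) y; have := nrm_triangle (y - x) x.
rewrite !subrK (nrm_distC y) ler_norml; lra.
Qed.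

Lemma nrm_le_mx_norm : exists2 C, 0 <= C & forall x, nrm x <= C * `|x|.
Proof.
exists (\sum_(j < n) nrm 'e_j); first exact: sumr_ge0.
move=> x; rewrite {1}(row_sum_delta x) mulr_suml.
apply: le_trans (ler_nrm_sum _ _ _) _; apply: ler_sum => j _.
by rewrite nrmZ mulrC ler_wpM2l // ler_coord_mx_norm.
Qed.

Lemma continuous_nrm : continuous nrm.
Proof.
have [C C0 nrmC] := nrm_le_mx_norm.
have C1 : 0 < C + 1 by rewrite ltr_wpDl.
move=> x; apply/(@cvgrPdist_le _ _ _ _ (nbhs_filter x)) => e e0.
apply: filterS (nbhsx_ballx x (e / (C + 1)) _); last by rewrite divr_gt0.
move=> y; rewrite -ball_normE /= ltr_pdivlMr // => xy.
apply: le_trans (ler_dist_nrm _ _) _; apply: le_trans (nrmC _) _.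
by apply/ltW/le_lt_trans/xy; rewrite mulrC ler_wpM2l ?lerDl.
Qed.

Lemma mx_norm_le_nrm : exists2 m, 0 < m & forall x, m * `|x| <= nrm x.
Proof.
pose S := [set x : 'rV[R]_n | `|x| = 1].
have S_compact : compact S.
  apply: (@closed_mx_norm_bounded_compact _ _ _ 1) => [|x -> //].
  by have := proj1 (continuous_closedP _) (@norm_continuous R 'rV[R]_n) _
    (@closed_eq _ 1).
have normalize x : `|x| != 0 -> S (`|x|^-1 *: x).
  by move=> x0; rewrite /S /= normrZ normfV normr_id mulVf.
(* [S] is empty only when [n = 0]. *)
have [[u Su]|S0] := pselect (S !=set0); last first.
  exists 1 => // x; rewrite mul1r; have [->|x0] := eqVneq `|x| 0; first exact: nrm_ge0.
  by case: S0; exists (`|x|^-1 *: x); apply: normalize.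
have [c /set_mem Sc c_min] := EVT_min_rV (ex_intro _ u Su) S_compact
  (continuous_subspaceT continuous_nrm).
have c_gt0 : 0 < nrm c.
  rewrite lt0r nrm_ge0 andbT; apply/eqP => /nrm_eq0 c0.
  by move: Sc; rewrite /S /= c0 normr0 => /eqP; rewrite eq_sym oner_eq0.
exists (nrm c) => // x; have [->|x0] := eqVneq `|x| 0; first by rewrite mulr0.
have := c_min _ (mem_set (normalize _ x0)); rewrite nrmZ normfV normr_id.
by rewrite ler_pdivlMl ?lt0r ?x0 ?normr_ge0 // (mulrC (nrm c)).
Qed.

Lemma compact_nrm_ball r : compact [set x | nrm x <= r].
Proof.
have [m m_gt0 m_le] := mx_norm_le_nrm.
apply: (@closed_mx_norm_bounded_compact _ _ _ (r / m)) => [|x /= xr].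
  by have := proj1 (continuous_closedP _) continuous_nrm _ (@closed_le _ r).
by rewrite ler_pdivlMr // mulrC (le_trans (m_le x)).
Qed.

Section ContinuousMap.
Context {G : 'rV[R]_n -> 'rV[R]_n} (G_cont : continuous G).

Lemma nrm_ball_uniform_continuous r e : 0 < e -> exists2 d, 0 < d &
  forall x y, nrm x <= r -> nrm y <= r -> nrm (x - y) <= d -> nrm (G x - G y) <= e.
Proof.
move=> e_gt0; have [C C_ge0 nrmC] := nrm_le_mx_norm.
have [m m_gt0 m_le] := mx_norm_le_nrm.
have C1 : 0 < C + 1 by rewrite ltr_wpDl.
have [d d_gt0 Gd] := compact_uniform_continuous _ _ _ G_cont (compact_nrm_ball r)
  (divr_gt0 e_gt0 C1).
exists (m * d / 2) => [|x y xr yr xy]; first by rewrite !mulr_gt0.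
have xy_d : `|x - y| < d.
  have := le_trans (m_le (x - y)) xy; rewrite -mulrA ler_pM2l //; lra.
apply: le_trans (nrmC _) _; have := Gd _ _ xr yr xy_d.
rewrite ltr_pdivlMr // => Ge; apply/ltW/le_lt_trans/Ge.
by rewrite mulrC ler_wpM2l ?lerDl.
Qed.

Lemma nrm_ball_bounded r : 0 <= r -> exists2 M, 0 < M &
  forall x, nrm x <= r -> nrm (G x) <= M.
Proof.
move=> r_ge0; have ball0 : [set x | nrm x <= r] 0 by rewrite /= nrm0.
have [c _ c_max] := EVT_max_rV (ex_intro _ 0 ball0) (compact_nrm_ball r)
  (continuous_subspaceT (fun x => continuous_comp (G_cont x) (continuous_nrm _))).
exists (nrm (G c) + 1) => [|x xr]; first by rewrite ltr_wpDl.
by have /= := c_max x (mem_set xr); lra.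
Qed.

End ContinuousMap.

Lemma ler_nrm_addZ (h : R) a b u v : 0 <= h ->
  nrm (a + h *: u - (b + h *: v)) <= nrm (a - b) + h * nrm u + h * nrm v.
Proof.
move=> h_ge0; rewrite opprD addrACA.
apply: le_trans (nrm_triangle _ _) _; rewrite -addrA lerD2l.
by apply: le_trans (nrm_triangle _ _) _; rewrite nrmN !nrmZ ger0_norm.
Qed.

Section EulerScheme.
Context {G : 'rV[R]_n -> 'rV[R]_n} (G_acc : strongly_accretive nrm G 1).
Context {h r M w : R} (h_ge0 : 0 <= h) (G0_r : nrm (G 0) + 1 <= r)
  (G_bounded : forall x, nrm x <= r -> nrm (G x) <= M) (hM_le1 : h * M <= 1)
  (w_ge0 : 0 <= w) (w_le1 : w <= 1)
  (G_modulus : forall x y, nrm x <= r + 1 -> nrm y <= r + 1 ->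
     nrm (x - y) <= h * M -> nrm (G x - G y) <= w).

Definition euler_step x := x - h *: G x.
Definition euler k := iter k euler_step 0.

Lemma euler0 : euler 0 = 0.
Proof. by []. Qed.

Lemma eulerS k : euler k.+1 = euler_step (euler k).
Proof. by rewrite /euler iterS. Qed.

Let h1_gt0 : 0 < 1 + h.
Proof. by have := h_ge0; lra. Qed.

Lemma accretive_expand x y :
  (1 + h) * nrm (x - y) <= nrm (x + h *: G x - (y + h *: G y)).
Proof. by have := G_acc x y h h_ge0; rewrite mulr1 opprD addrACA -scalerBr. Qed.

Lemma euler_step_add a :
  euler_step a + h *: G (euler_step a) = a + h *: (G (euler_step a) - G a).
Proof. by rewrite /euler_step scalerBr addrA addrAC. Qed.

Lemma euler_step_contract a b :
  (1 + h) * nrm (euler_step a - euler_step b) <=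
  nrm (a - b) + h * nrm (G (euler_step a) - G a) + h * nrm (G (euler_step b) - G b).
Proof.
by apply: le_trans (accretive_expand _ _) _; rewrite !euler_step_add ler_nrm_addZ.
Qed.

Lemma euler_step_modulus a : nrm a <= r ->
  nrm (euler_step a - a) <= h * M /\ nrm (G (euler_step a) - G a) <= w.
Proof.
move=> ar; have step_le : nrm (euler_step a - a) <= h * M.
  by rewrite /euler_step addrAC subrr add0r nrmN nrmZ ger0_norm // ler_wpM2l ?G_bounded.
have Sa_r : nrm (euler_step a) <= r + 1.
  have := nrm_triangle (euler_step a - a) a; rewrite subrK => tri.
  by apply: le_trans tri _; have := hM_le1; lra.
by split=> //; apply: G_modulus => //; lra.
Qed.

Lemma euler_bounded k : nrm (euler k) <= r.
Proof.
have G0_ge0 := nrm_ge0 (G 0); have G0r := G0_r; have w1 := w_le1.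
elim: k => [|k IH]; first by rewrite /euler /= nrm0; lra.
have [_ modk] := euler_step_modulus _ IH.
have expand : (1 + h) * nrm (euler k.+1) <=
    nrm (euler k) + h * w + h * nrm (G 0).
  have := accretive_expand (euler k.+1) 0.
  rewrite subr0 eulerS euler_step_add => /le_trans; apply.
  apply: le_trans (ler_nrm_addZ _ _ _ _ _ h_ge0) _.
  by rewrite subr0 lerD2r lerD2l ler_wpM2l.
have hr : h * (w + nrm (G 0)) <= h * r by rewrite ler_wpM2l //; lra.
by rewrite -(ler_pM2l h1_gt0); lra.
Qed.

Lemma euler_shift j k :
  (1 + h) ^+ k * (nrm (euler (k + j) - euler k) - 2 * w) <= nrm (euler j).
Proof.
have w0 := w_ge0; elim: k => [|k IH].
  by rewrite expr0 mul1r add0n euler0 subr0; lra.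
have [_ mod_kj] := euler_step_modulus _ (euler_bounded (k + j)).
have [_ mod_k] := euler_step_modulus _ (euler_bounded k).
have contract := euler_step_contract (euler (k + j)) (euler k).
rewrite -!eulerS in contract mod_kj mod_k.
have := ler_wpM2l h_ge0 mod_kj; have := ler_wpM2l h_ge0 mod_k => hk hkj.
rewrite exprSr -mulrA addSn; apply: le_trans IH.
by rewrite ler_wpM2l ?exprn_ge0 ?(ltW h1_gt0) //; lra.
Qed.

Lemma euler_drift j : nrm (euler j) <= j%:R * (h * M).
Proof.
elim: j => [|j IH]; first by rewrite euler0 nrm0 mul0r.
have [step_le _] := euler_step_modulus _ (euler_bounded j).
have := nrm_triangle (euler_step (euler j) - euler j) (euler j).
by rewrite subrK -eulerS -natr1 in step_le *; lra.
Qed.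

Lemma euler_sub k j :
  euler (k + j) - euler k = - (h *: \sum_(i < j) G (euler (k + i))).
Proof.
elim: j => [|j IH]; first by rewrite addn0 subrr big_ord0 scaler0 oppr0.
by rewrite addnS eulerS /euler_step big_ord_recr /= scalerDr opprD -IH addrAC.
Qed.

Lemma euler_near_zero (m k : nat) (delta e : R) :
  h * m%:R = 1 -> M <= (1 + h) ^+ k * delta ->
  (forall x y, nrm x <= r -> nrm y <= r -> nrm (x - y) <= 2 * w + delta ->
     nrm (G x - G y) <= e) ->
  nrm (euler k) <= r /\ nrm (G (euler k)) <= 2 * w + delta + e.
Proof.
move=> hm M_le G_e; split; first exact: euler_bounded.
have M_ge0 : 0 <= M.
  by have := euler_bounded 0; rewrite euler0 => /G_bounded; apply: le_trans.
have near i : (i <= m)%N -> nrm (euler (k + i) - euler k) <= 2 * w + delta.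
  move=> im; have iM : i%:R * (h * M) <= M.
    apply: (@le_trans _ _ (m%:R * (h * M))).
      by rewrite ler_wpM2r ?mulr_ge0 ?ler_nat.
    by rewrite mulrA [m%:R * h]mulrC hm mul1r.
  have := le_trans (euler_shift i k) (le_trans (euler_drift i) (le_trans iM M_le)).
  by rewrite ler_pM2l ?exprn_gt0 //; lra.
have G_eq : G (euler k) = - (euler (k + m) - euler k) -
    h *: \sum_(i < m) (G (euler (k + i)) - G (euler k)).
  rewrite euler_sub opprK sumrB scalerBr sumr_const card_ord -scaler_nat.
  by rewrite scalerA hm scale1r opprB addrC subrK.
have sum_le : h * nrm (\sum_(i < m) (G (euler (k + i)) - G (euler k))) <= e.
  rewrite -[leRHS]mul1r -hm -mulrA ler_wpM2l //.
  apply: le_trans (ler_nrm_sum _ _ _) _.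
  have : \sum_(i < m) nrm (G (euler (k + i)) - G (euler k)) <= \sum_(i < m) e.
    by apply: ler_sum => i _; apply: G_e; rewrite ?euler_bounded ?near // ltnW.
  by rewrite sumr_const card_ord mulr_natl.
rewrite G_eq; apply: le_trans (nrm_triangle _ _) _; rewrite nrmN nrmN nrmZ ger0_norm //.
by have := near m (leqnn m); lra.
Qed.

End EulerScheme.

Section AccretiveZero.
Context {G : 'rV[R]_n -> 'rV[R]_n} (G_cont : continuous G)
  (G_acc : strongly_accretive nrm G 1).

Lemma strongly_accretive_approx_zero eps : 0 < eps ->
  exists x, nrm x <= nrm (G 0) + 1 /\ nrm (G x) <= eps.
Proof.
move=> eps_gt0; set r := nrm (G 0) + 1.
have G0_r : nrm (G 0) + 1 <= r by [].
have r_ge0 : 0 <= r by rewrite ltW ?ltr_wpDl.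
have [M M_gt0 G_bounded] := nrm_ball_bounded G_cont _ r_ge0.
have [d d_gt0 G_d] := nrm_ball_uniform_continuous G_cont (r + 1) _
  (divr_gt0 eps_gt0 (ltr0n _ 3)).
(* The Euler error [2 w + rho / 3] is then at most [rho], which is below both
   the radius [d] for [eps / 3] and [eps / 3] itself. *)
pose rho := Num.min d (eps / 3); pose w := Num.min 1 (rho / 3).
have rho_gt0 : 0 < rho by rewrite lt_min d_gt0 divr_gt0.
have w_gt0 : 0 < w by rewrite lt_min ltr01 divr_gt0.
have [w_le1 w_le_rho] : w <= 1 /\ w <= rho / 3 by split; rewrite ge_min lexx ?orbT.
have [rho_le_d rho_le_eps] : rho <= d /\ rho <= eps / 3.
  by split; rewrite ge_min lexx ?orbT.
have [d1 d1_gt0 G_d1] := nrm_ball_uniform_continuous G_cont (r + 1) _ w_gt0.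
pose q := Num.min d1 1.
have q_gt0 : 0 < q by rewrite lt_min d1_gt0 ltr01.
have [q_le_d1 q_le1] : q <= d1 /\ q <= 1 by split; rewrite ge_min lexx ?orbT.
pose m := Num.Def.archi_bound (M / q); pose h := (m%:R : R)^-1.
have Mq_ge0 : 0 <= M / q by rewrite divr_ge0 ?ltW.
have Mq_lt_m : M / q < m%:R by apply: archi_boundP.
have m_gt0 : 0 < m%:R :> R by apply: le_lt_trans Mq_lt_m.
have h_gt0 : 0 < h by rewrite invr_gt0.
have hm : h * m%:R = 1 by rewrite mulVf ?gt_eqF.
have hM_le_q : h * M <= q.
  by rewrite /h ler_pdivrMl // -ler_pdivrMr // ltW.
have [k M_le] := exists_expr_ge _ M _ h_gt0 (divr_gt0 rho_gt0 (ltr0n _ 3)).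
have hM_le1 : h * M <= 1 := le_trans hM_le_q q_le1.
have G_modulus x y : nrm x <= r + 1 -> nrm y <= r + 1 -> nrm (x - y) <= h * M ->
    nrm (G x - G y) <= w.
  by move=> xr yr xy; apply: G_d1 => //; apply: le_trans xy (le_trans hM_le_q q_le_d1).
have G_delta x y : nrm x <= r -> nrm y <= r -> nrm (x - y) <= 2 * w + rho / 3 ->
    nrm (G x - G y) <= eps / 3.
  by move=> xr yr xy; apply: G_d; lra.
have [euler_r euler_G] := euler_near_zero G_acc (ltW h_gt0) G0_r G_bounded hM_le1
  (ltW w_gt0) w_le1 G_modulus m k (rho / 3) (eps / 3) hm M_le G_delta.
by exists (@euler G h k); split => //; lra.
Qed.

Lemma strongly_accretive_zero : exists x, G x = 0.
Proof.
set r := nrm (G 0) + 1.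
have ball0 : [set x | nrm x <= r] 0 by rewrite /= nrm0 ltW ?ltr_wpDl.
have [c /set_mem c_r c_min] := EVT_min_rV (ex_intro _ 0 ball0) (compact_nrm_ball r)
  (continuous_subspaceT (fun x => continuous_comp (G_cont x) (continuous_nrm _))).
exists c; apply: nrm_eq0; apply/eqP; rewrite eq_le nrm_ge0 andbT leNgt.
apply/negP => Gc_gt0.
have [x [x_r Gx_le]] := strongly_accretive_approx_zero _ (divr_gt0 Gc_gt0 (ltr0n _ 2)).
by have /= := c_min x (mem_set x_r); lra.
Qed.

End AccretiveZero.

Lemma strongly_accretive_surjective G : continuous G ->
  strongly_accretive nrm G 1 -> forall u, exists x, G x = u.
Proof.
move=> G_cont G_acc u; pose Gu x := G x - u.
have Gu_cont : continuous Gu.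
  by move=> x; apply: continuousB; [exact: G_cont | exact: cst_continuous].
have Gu_acc : strongly_accretive nrm Gu 1.
  by move=> x y k k_ge0; rewrite /Gu opprB addrA subrK; apply: G_acc.
have [x /eqP] := strongly_accretive_zero Gu_cont Gu_acc.
by rewrite subr_eq0 => /eqP Gx; exists x.
Qed.

Lemma strongly_accretive_le F c c' : c' <= c ->
  strongly_accretive nrm F c -> strongly_accretive nrm F c'.
Proof.
move=> c'c F_acc x y k k_ge0; apply: le_trans (F_acc x y k k_ge0).
by rewrite ler_wpM2r // lerD2l ler_wpM2l.
Qed.

Lemma strongly_accretive_id_add F c (alpha : R) : 0 <= alpha ->
  strongly_accretive nrm F c ->
  strongly_accretive nrm (fun x => x + alpha *: F x) (1 + alpha * c).
Proof.
move=> alpha_ge0 F_acc x y k k_ge0; have k1_gt0 : 0 < 1 + k by rewrite ltr_wpDr.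
have ka_ge0 : 0 <= k * alpha / (1 + k).
  by apply: divr_ge0; [exact: mulr_ge0 | exact: ltW].
have -> : x + alpha *: F x - (y + alpha *: F y) = x - y + alpha *: (F x - F y).
  by rewrite opprD addrACA scalerBr.
have -> : x - y + k *: (x - y + alpha *: (F x - F y)) =
    (1 + k) *: (x - y + (k * alpha / (1 + k)) *: (F x - F y)).
  by apply/rowP => i; rewrite !mxE; field; rewrite gt_eqF.
rewrite nrmZ gtr0_norm //.
apply: le_trans (ler_wpM2l (ltW k1_gt0) (F_acc _ _ _ ka_ge0)).
rewrite mulrA [X in _ <= X * _](_ : _ = 1 + k * (1 + alpha * c)) //.
by field; rewrite gt_eqF.
Qed.

Lemma weak_pairing_le_nrm wp : is_weak_pairing wp -> wp_compatible nrm wp ->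
  forall u v, wp u v <= nrm u * nrm v.
Proof.
move=> [_ _ _ _ [_ wp_CS]] wp_nrm u v; apply: le_trans (ler_norm _) _.
by apply: le_trans (wp_CS u v) _; rewrite !wp_nrm !sqrtr_sqr !ger0_norm.
Qed.

Lemma monotone_strongly_accretive F c :
  monotone_wrt nrm F c -> strongly_accretive nrm F c.
Proof.
move=> [_ [wp [[wp_weak _ _] wp_nrm F_mono]]] x y k k_ge0.
have [wp_subadd _ wp_homo _ _] := wp_weak.
set d := x - y; set b := F x - F y; set e := d + k *: b.
have split_d : wp d d <= wp e d + k * wp (- b) d.
  have [<- _] := wp_homo k (- b) d k_ge0.
  by have := wp_subadd e (k *: - b) d; rewrite /e scalerN addrK.
have := weak_pairing_le_nrm _ wp_weak wp_nrm e d; have := F_mono x y.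
rewrite -/d -/b wp_nrm in split_d * => mono_b wp_e.
have [d0|d_neq0] := eqVneq (nrm d) 0; first by rewrite d0 mulr0.
have d_gt0 : 0 < nrm d by rewrite lt0r d_neq0 nrm_ge0.
rewrite -(ler_pM2r d_gt0); have := nrm_ge0 e; nra.
Qed.

Lemma expansive_inverse Phi (L : R) : 0 < L ->
  (forall x y, L * nrm (x - y) <= nrm (Phi x - Phi y)) ->
  (forall u, exists x, Phi x = u) ->
  exists J, [/\ cancel J Phi, cancel Phi J & lip_le nrm J (1 / L)].
Proof.
move=> L_gt0 Phi_exp Phi_surj; pose J u := projT1 (cid (Phi_surj u)).
have JK : cancel J Phi by move=> u; rewrite /J; case: cid.
have Phi_inj : injective Phi.
  move=> x y Pxy; have := Phi_exp x y; rewrite Pxy subrr nrm0 pmulr_rle0 // => xy.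
  by apply/eqP; rewrite -subr_eq0; apply/eqP/nrm_eq0/eqP; rewrite eq_le xy nrm_ge0.
exists J; split => //; first exact: inj_can_sym Phi_inj.
by move=> u v; have := Phi_exp (J u) (J v); rewrite !JK mul1r ler_pdivlMl.
Qed.

End FiniteDimensionalNorm.

Theorem lemma22 (R : realType) (n : nat) (nrm : 'rV[R]_n -> R)
    (F : 'rV[R]_n -> 'rV[R]_n) (c : R) :
  is_norm nrm -> continuous F -> monotone_wrt nrm F c ->
  forall alpha : R, 0 < alpha ->
  exists J : 'rV[R]_n -> 'rV[R]_n,
    [/\ cancel J (fun x => x + alpha *: F x),
        cancel (fun x => x + alpha *: F x) J
      & lip_le nrm J (1 / (1 + alpha * c))].
Proof.
move=> nrm_norm F_cont F_mono alpha alpha_gt0; have [c_ge0 _] := F_mono.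
have F_acc := monotone_strongly_accretive nrm_norm _ _ F_mono.
have Phi_acc := strongly_accretive_id_add nrm_norm _ _ _ (ltW alpha_gt0) F_acc.
have Phi_cont : continuous (fun x : 'rV[R]_n => x + alpha *: F x).
  move=> x; apply: (@continuousD _ _ _ id (fun x => alpha *: F x)); first exact: cvg_id.
  exact: continuousZl_tmp (F_cont x).
have L_ge1 : 1 <= 1 + alpha * c by rewrite lerDl (mulr_ge0 (ltW alpha_gt0)).
apply: (expansive_inverse nrm_norm _ _ (lt_le_trans ltr01 L_ge1)).
  move=> x y; have := F_acc x y alpha (ltW alpha_gt0).
  by rewrite opprD addrACA -scalerBr.
exact: strongly_accretive_surjective nrm_norm _ Phi_cont
  (strongly_accretive_le nrm_norm _ _ _ L_ge1 Phi_acc).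
Qed.
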